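(* For every $N\in\mathbb{N}$ there exists $L\in\mathbb{N}$ and an integer $n\geq N$ such that $\Delta_\ell(n)<0$ for all $\ell\geq L$.
   Context: For integers $n\geq 0$ let $S_n$ be the symmetric group on $n$ elements ($S_0$ trivial). For an integer $\ell\geq 1$ let $C_{\ell,n}=\{(\pi_1,\dots,\pi_\ell)\in S_n^\ell : \pi_j\pi_k=\pi_k\pi_j \text{ for all } 1\le j,k\le \ell\}$ and $N_\ell(n)=|C_{\ell,n}|/|S_n|$ (so $N_\ell(0)=1$). Define $\Delta_\ell(n)=N_\ell(n)^2-N_\ell(n-1)N_\ell(n+1)$ for $n\geq 1$. *)

From HB Require Import structures.
From mathcomp Require Import all_boot all_order all_fingroup all_algebra.
Set Implicit Arguments. Unset Strict Implicit. Unset Printing Implicit Defensive.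
Import GRing.Theory Num.Theory.

Definition commuting_tuples (l n : nat) : {set {ffun 'I_l -> {perm 'I_n}}} :=
  [set f : {ffun 'I_l -> {perm 'I_n}} | [forall j, forall k, (f j * f k == f k * f j)%g]].

Definition Nl (l n : nat) : rat :=
  ((#|commuting_tuples l n|)%:R / (#|[set: {perm 'I_n}]|)%:R)%R.

(* Delta_l(n) = N_l(n)^2 - N_l(n-1) N_l(n+1)  (meaningful for n >= 1). *)
Definition Delta (l n : nat) : rat :=
  (Nl l n ^+ 2 - Nl l n.-1 * Nl l n.+1)%R.

From mathcomp Require Import all_boot all_order all_fingroup all_algebra.
From mathcomp Require Import zify ring lra.
Set Implicit Arguments. Unset Strict Implicit. Unset Printing Implicit Defensive.
Import GRing.Theory Num.Theory.

(* A commuting l-tuple of permutations generates an abelian subgroup of S_n.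
   An abelian permutation group on n points has order at most
   [abelian_bound n], which is 4 * 3^m for n = 3m + 4: by orbit-stabiliser,
   the stabiliser of a point in an abelian group fixes its whole orbit, so the
   bound is supermultiplicative over orbits.  Hence for n = 3m + 4,
   |C_{l,n}| <= (number of subgroups of S_n) * (4 * 3^m)^l, whereas
   block-diagonal products of cyclic translations give
   |C_{l,n-1}| >= 3^(l(m+1)) and |C_{l,n+1}| >= 2^l * 3^(l(m+1)).  The ratio
   N_l(n)^2 / (N_l(n-1) N_l(n+1)) is thus at most a constant times (16/18)^l,
   which drops below 1 once l is large. *)

(* For n >= 2 this is 3^k, 4 * 3^(k-1) or 2 * 3^k according as n = 3k, 3k + 1
   or 3k + 2: the largest order of an abelian subgroup of S_n. *)
Fixpoint abelian_bound (n : nat) : nat :=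
  if n is k.+3 then (if k < 2 then n else 3 * abelian_bound k) else maxn n 1.

Lemma abelian_boundD3 n : 2 <= n -> abelian_bound (n + 3) = 3 * abelian_bound n.
Proof. by move=> le2n; rewrite addn3 /= ltnNge le2n. Qed.

Lemma leq_abelian_bound n : n <= abelian_bound n.
Proof.
elim/ltn_ind: n => -[|[|[|k]]] // IH /=.
by case: (ltnP k 2) => // le2k; have := IH k; lia.
Qed.

Lemma abelian_bound_3m4 m : abelian_bound (3 * m + 4) = 4 * 3 ^ m.
Proof.
elim: m => // m IH.
have -> : 3 * m.+1 + 4 = (3 * m + 4) + 3 by lia.
rewrite abelian_boundD3; last by rewrite addn4.
by rewrite IH expnS mulnCA.
Qed.

Lemma abelian_boundM a b :
  abelian_bound a * abelian_bound b <= abelian_bound (a + b).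
Proof.
have [k] := ubnP (a + b); elim: k a b => // k IH a b ltabk.
wlog le_ab : a b ltabk / a <= b.
  move=> sym; have [/sym|/ltnW] := leqP a b; first exact.
  by rewrite mulnC addnC; apply: sym; rewrite // addnC.
have [le_b4|lt4b] := leqP b 4.
  by case: b le_b4 le_ab {ltabk} => [|[|[|[|[|]]]]] //; case: a => [|[|[|[|[|]]]]].
have [le3b le2b] : 3 <= b /\ 2 <= b - 3 by lia.
rewrite -(subnK le3b) addnA !abelian_boundD3 ?(leq_trans le2b (leq_addl _ _)) //.
by rewrite mulnCA leq_mul2l IH //; lia.
Qed.

Section AbelianPermGroups.

Variable T : finType.
Implicit Types (H : {group {perm T}}) (S : {set T}).
Local Open Scope group_scope.

Lemma abelian_stab_fixes_orbit H x :
  abelian H -> 'C_H[x | 'P] \subset 'C(orbit 'P H x | 'P).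
Proof.
move=> abH; apply/subsetP => g /setIP [Hg /astab1P gx].
apply/astabP => _ /orbitP [h Hh <-].
move: gx; rewrite /= !apermE => gx.
by rewrite -permM -(centsP abH g Hg h Hh) permM gx.
Qed.

Lemma card_abelian_perm_support H S :
  abelian H -> H \subset 'C(~: S | 'P) -> #|H| <= abelian_bound #|S|.
Proof.
have [k] := ubnP #|S|; elim: k S H => // k IH S H ltSk abH cSH.
have [S0 | [x Sx]] := set_0Vmem S.
  suff /subset_leq_card : H \subset [1 {perm T}].
    by rewrite cards1 S0 cards0.
  apply/subsetP => h Hh; rewrite inE; apply/eqP/permP => y.
  by rewrite perm1 -[h y]/(aperm y h) (astab_act (subsetP cSH h Hh)) // S0 setC0 inE.
set O := orbit 'P H x.
have sOS : O \subset S.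
  rewrite acts_sub_orbit // -astabsC; exact: subset_trans cSH (astab_sub _ _).
have cSt : 'C_H[x | 'P] \subset 'C(~: (S :\: O) | 'P).
  rewrite setCD astabU subsetI (subset_trans (subsetIl _ _) cSH).
  exact: abelian_stab_fixes_orbit.
have O_gt0 : 0 < #|O| by apply/card_gt0P; exists x; apply: orbit_refl.
have cardS : #|O| + #|S :\: O| = #|S|.
  by rewrite cardsD (setIidPr sOS) subnKC // subset_leq_card.
rewrite -(card_orbit_stab 'P H x) -/O -cardS.
apply: leq_trans (abelian_boundM _ _); apply: leq_mul (leq_abelian_bound _) _.
apply: IH cSt; first lia.
exact: abelianS (subsetIl _ _) abH.
Qed.

Lemma card_abelian_perm H : abelian H -> #|H| <= abelian_bound #|T|.
Proof.
rewrite -cardsT => abH; apply: card_abelian_perm_support => //.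
by rewrite setCT; apply/subsetP => h _; apply/astabP => y; rewrite inE.
Qed.

End AbelianPermGroups.

Lemma leq_card_bigcup (I T : finType) (P : pred I) (F : I -> {set T}) :
  #|\bigcup_(i | P i) F i| <= \sum_(i | P i) #|F i|.
Proof.
elim/big_rec2: _ => [|i B k _ IH]; first by rewrite cards0.
exact: leq_trans (leq_card_setU _ _).1 (leq_add (leqnn _) IH).
Qed.

Lemma card_commuting_ffun_le (gT : finGroupType) l b :
  (forall G : {group gT}, abelian G -> #|G| <= b) ->
  #|[set f : {ffun 'I_l -> gT} | [forall j, forall k, (f j * f k == f k * f j)%g]]|
    <= #|{group gT}| * b ^ l.
Proof.
move=> abelian_le.
have leq_pow m : m <= b -> m ^ l <= b ^ l by case: l => // l; rewrite leq_exp2r.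
set C := [set f | _].
pose tuples_in (G : {group gT}) := [set f : {ffun 'I_l -> gT} | [forall j, f j \in G]].
have sub_abelian : C \subset \bigcup_(G : {group gT} | abelian G) tuples_in G.
  apply/subsetP => f; rewrite inE => /forallP comm_f; apply/bigcupP.
  exists <<[set f j | j : 'I_l]>>%G; last first.
    by rewrite inE; apply/forallP => j; apply/mem_gen/imset_f.
  rewrite /= abelian_gen; apply/centsP => _ /imsetP [j _ ->] _ /imsetP [k _ ->].
  exact/eqP/(forallP (comm_f j) k).
have card_tuples_in G : #|tuples_in G| = #|G| ^ l.
  rewrite -[l in RHS]card_ord -card_ffun_on; apply: eq_card => f.
  by rewrite inE; apply/forallP/ffun_onP.
apply: leq_trans (subset_leq_card sub_abelian) _.
apply: leq_trans (leq_card_bigcup _ _) _.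
apply: leq_trans (_ : \sum_(G : {group gT} | abelian G) b ^ l <= _).
  apply: leq_sum => G /abelian_le; rewrite card_tuples_in; exact: leq_pow.
by rewrite sum_nat_const leq_mul2r max_card orbT.
Qed.

Lemma card_commuting_tuples_le l n :
  #|commuting_tuples l n| <= #|{group {perm 'I_n}}| * abelian_bound n ^ l.
Proof.
apply: card_commuting_ffun_le => G /card_abelian_perm.
by rewrite card_ord.
Qed.

Lemma card_commuting_tuples_gt0 l n : 0 < #|commuting_tuples l n|.
Proof.
apply/card_gt0P; exists [ffun=> 1%g].
by rewrite inE; apply/forallP => j; apply/forallP => k; rewrite !ffunE.
Qed.

Definition translation_perm n (i : 'I_n.+1) : {perm 'I_n.+1} := perm (addrI i).

Lemma translation_permE n (i x : 'I_n.+1) : translation_perm i x = (i + x)%R.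
Proof. exact: permE. Qed.

Lemma card_commuting_tuples_cyclic l n : n.+1 ^ l <= #|commuting_tuples l n.+1|.
Proof.
pose F (e : {ffun 'I_l -> 'I_n.+1}) := [ffun j => translation_perm (e j)].
have F_inj : injective F.
  move=> e e' /ffunP eq_F; apply/ffunP => j.
  move: (eq_F j); rewrite !ffunE => /permP /(_ 0%R).
  by rewrite !translation_permE !addr0.
have -> : n.+1 ^ l = #|[set F e | e in {ffun 'I_l -> 'I_n.+1}]|.
  by rewrite card_imset // card_ffun !card_ord.
apply: subset_leq_card; apply/subsetP => _ /imsetP [e _ ->].
rewrite inE; apply/forallP => j; apply/forallP => k; apply/eqP/permP => x.
by rewrite !permM !ffunE !translation_permE addrCA.
Qed.

Section BlockPerm.

Variables a b : nat.

Definition block_fun (s : {perm 'I_a}) (t : {perm 'I_b}) (i : 'I_(a + b)) :=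
  unsplit (match split i with inl j => inl (s j) | inr j => inr (t j) end).

Lemma block_fun_inj s t : injective (block_fun s t).
Proof.
move=> i i' /(can_inj unsplitK) eq_st; apply: (can_inj splitK).
by case: (split i) eq_st => j; case: (split i') => j' // [] /perm_inj ->.
Qed.

Definition block_perm s t : {perm 'I_(a + b)} := perm (@block_fun_inj s t).

Lemma block_permM s t s' t' :
  (block_perm s t * block_perm s' t')%g = block_perm (s * s') (t * t').
Proof.
apply/permP => i; rewrite permM !permE /block_fun unsplitK.
by case: (split i) => j; rewrite permM.
Qed.

Lemma block_perm_inj s t s' t' :
  block_perm s t = block_perm s' t' -> s = s' /\ t = t'.
Proof.
move=> /permP eq_st; split; apply/permP => j;
  [move: (eq_st (unsplit (inl j))) | move: (eq_st (unsplit (inr j)))];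
  by rewrite !permE /block_fun unsplitK => /(can_inj unsplitK) [].
Qed.

Lemma card_commuting_tuplesD l :
  #|commuting_tuples l a| * #|commuting_tuples l b| <= #|commuting_tuples l (a + b)|.
Proof.
pose F (p : {ffun 'I_l -> {perm 'I_a}} * {ffun 'I_l -> {perm 'I_b}}) :=
  [ffun j => block_perm (p.1 j) (p.2 j)].
have F_inj : injective F.
  move=> [f g] [f' g'] /ffunP eq_F.
  have eq_fg j : f j = f' j /\ g j = g' j.
    by apply: block_perm_inj; move: (eq_F j); rewrite !ffunE.
  by congr pair; apply/ffunP => j; case: (eq_fg j).
rewrite -cardsX -(card_imset _ F_inj).
apply: subset_leq_card; apply/subsetP => st /imsetP [[f g] /setXP []].
rewrite !inE => comm_f comm_g -> {st}.
apply/forallP => j; apply/forallP => k; rewrite !ffunE /= !block_permM.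
by rewrite (eqP (forallP (forallP comm_f j) k)) (eqP (forallP (forallP comm_g j) k)).
Qed.

End BlockPerm.

Lemma card_commuting_tuples_3m l m : (3 ^ l) ^ m <= #|commuting_tuples l (3 * m)|.
Proof.
elim: m => [|m IH]; first exact: card_commuting_tuples_gt0.
rewrite mulnS expnS; apply: leq_trans (card_commuting_tuplesD _ _ _).
exact: leq_mul (card_commuting_tuples_cyclic l 2) IH.
Qed.

Lemma card_commuting_tuples_3m2 l m :
  2 ^ l * (3 ^ l) ^ m <= #|commuting_tuples l (3 * m + 2)|.
Proof.
rewrite addnC; apply: leq_trans (card_commuting_tuplesD _ _ _).
exact: leq_mul (card_commuting_tuples_cyclic l 1) (card_commuting_tuples_3m l m).
Qed.

Lemma card_commuting_tuples_3m4 l m :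
  #|commuting_tuples l (3 * m + 4)| <=
    #|{group {perm 'I_(3 * m + 4)}}| * 4 ^ l * (3 ^ l) ^ m.
Proof.
by rewrite -mulnA -expnAC -expnMn -abelian_bound_3m4 card_commuting_tuples_le.
Qed.

Lemma bernoulli_expn a l : a ^ l * (a + l) <= a * a.+1 ^ l.
Proof.
elim: l => [|l IH]; first by rewrite mulnC addn0.
have le_pow : a ^ l <= a.+1 ^ l by case: l {IH} => // l; rewrite leq_exp2r.
rewrite !expnS; nia.
Qed.

Lemma ltn_geometric a c l : 0 < a -> a * c <= l -> c * a ^ l < a.+1 ^ l.
Proof.
move=> a_gt0 le_ac_l; rewrite -(ltn_pmul2l a_gt0) mulnA.
apply: leq_trans (bernoulli_expn a l); rewrite mulnC ltn_pmul2l ?expn_gt0 ?a_gt0 //.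
lia.
Qed.

Lemma card_commuting_tuples_log_convex m l (n := 3 * m + 4) :
  8 * (#|{group {perm 'I_n}}| ^ 2 * n.+1) <= l ->
  #|commuting_tuples l n| ^ 2 * n.+1 <
    #|commuting_tuples l n.-1| * #|commuting_tuples l n.+1| * n.
Proof.
set K := #|{group _}| => le_l.
set t := (3 ^ l) ^ m.
have upper : #|commuting_tuples l n| <= K * 4 ^ l * t := card_commuting_tuples_3m4 l m.
have lower_pred : 3 ^ l * t <= #|commuting_tuples l n.-1|.
  by rewrite -expnS (_ : n.-1 = 3 * m.+1) ?card_commuting_tuples_3m //; lia.
have lower_succ : 2 ^ l * (3 ^ l * t) <= #|commuting_tuples l n.+1|.
  by rewrite -expnS (_ : n.+1 = 3 * m.+1 + 2) ?card_commuting_tuples_3m2 //; lia.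
have gap : K ^ 2 * n.+1 * 16 ^ l < 18 ^ l.
  rewrite (_ : 16 = 2 * 8) // (_ : 18 = 2 * 9) // !expnMn mulnCA ltn_pmul2l ?expn_gt0 //.
  exact: ltn_geometric.
apply: (@leq_ltn_trans ((K * 4 ^ l * t) ^ 2 * n.+1)).
  by rewrite leq_mul2r leq_exp2r // upper orbT.
apply: (@leq_trans (18 ^ l * t ^ 2)).
  have -> : (K * 4 ^ l * t) ^ 2 * n.+1 = K ^ 2 * n.+1 * 16 ^ l * t ^ 2.
    by rewrite -[16]/(4 * 4) [(4 * 4) ^ l]expnMn; ring.
  by rewrite ltn_pmul2r ?expn_gt0 ?gap.
apply: leq_trans (leq_pmulr _ (_ : 0 < n)); last by rewrite /n addn4.
apply: leq_trans (leq_mul lower_pred lower_succ).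
by rewrite -[18]/(3 * (2 * 3)) !expnMn; apply: eq_leq; ring.
Qed.

Lemma NlE l n : Nl l n = (#|commuting_tuples l n|%:R / n`!%:R)%R.
Proof. by rewrite /Nl cardsT card_Sn. Qed.

Lemma Delta_lt0 l n :
  0 < n ->
  #|commuting_tuples l n| ^ 2 * n.+1 <
    #|commuting_tuples l n.-1| * #|commuting_tuples l n.+1| * n ->
  (Delta l n < 0)%R.
Proof.
case: n => // k _; rewrite /= /Delta !NlE.
set c := #|commuting_tuples l k.+1|; set a := #|commuting_tuples l k|.
set b := #|commuting_tuples l k.+2| => lt_cab.
have -> : ((c%:R / k.+1`!%:R) ^+ 2 - a%:R / k`!%:R * (b%:R / k.+2`!%:R) =
    ((c ^ 2 * k.+2)%:R - (a * b * k.+1)%:R) / (k`! ^ 2 * k.+1 ^ 2 * k.+2)%:R :> rat)%R.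
  rewrite !factS !natrM; field.
  have k_ge0 : (0 <= k%:R :> rat)%R := ler0n _ k.
  have fact_pos : (0 < k`!%:R :> rat)%R by rewrite ltr0n fact_gt0.
  by apply/and3P; split; apply/eqP; lra.
by rewrite ltr_pdivrMr ?mul0r ?subr_lt0 ?ltr_nat // ltr0n !muln_gt0 fact_gt0.
Qed.

Theorem corollary1p5 :
  forall N : nat, exists (L n : nat),
    (N <= n)%N /\ (1 <= n)%N /\
    (forall l : nat, (1 <= l)%N -> (L <= l)%N -> (Delta l n < 0)%R).
Proof.
move=> N; pose n := 3 * N + 4.
exists (8 * (#|{group {perm 'I_n}}| ^ 2 * n.+1)), n.
split; first by rewrite /n; lia.
split; first by rewrite /n addn4.
move=> l _ le_l; apply: Delta_lt0; first by rewrite /n addn4.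
exact: card_commuting_tuples_log_convex.
Qed.
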